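(* Let $G$ be a connected cograph with cotree $T$, let $w_1,\ldots,w_t$ be the children of the root of $T$, and for each $i$ let $G_i$ be the subgraph of $G$ induced by the leaves of the subtree of $T$ rooted at $w_i$. Then the family of sets $S_i=V(G)\setminus V(G_i)$, $i=1,\ldots,t$, is exactly the family of all minimal vertex separators of $G$.
   Context: A cograph is a graph that can be built from single vertices by repeatedly taking disjoint unions (label 0) and joins (label 1). The cotree of a cograph is the unique rooted tree whose leaves are the vertices of $G$, whose internal nodes are labelled 0 or 1 and each have at least two children, with labels alternating along every root-to-leaf path, such that two vertices are adjacent iff their lowest common ancestor is labelled 1; for a connected cograph the root is labelled 1. A vertex separator of a connected graph $G$ is a set $S\subset V(G)$ such that the subgraph induced on $V(G)\setminus S$ is disconnected; it is minimal if no proper subset of $S$ is a vertex separator.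
   Formalization: The family consists only of the sets $S_i=V(G)\setminus V(G_i)$ for those children $w_i$ of the root of T that are internal nodes, so the $S_i$ with $w_i$ a leaf are left out. The statement above fails without it. *)

From mathcomp Require Import all_boot.
Set Implicit Arguments. Unset Strict Implicit. Unset Printing Implicit Defensive.

Section Graphs.
Variable T : finType.
(* A simple graph on vertex set T is a symmetric irreflexive relation e. *)
Variable e : rel T.

Definition induced_rel (A : {set T}) : rel T :=
  fun x y => [&& x \in A, y \in A & e x y].

Definition connected_set (A : {set T}) : Prop :=
  A != set0 /\ forall x y, x \in A -> y \in A -> connect (induced_rel A) x y.

Definition disconnected_set (A : {set T}) : Prop :=
  exists x y, [/\ x \in A, y \in A & ~~ connect (induced_rel A) x y].

Definition connected_graph : Prop := connected_set setT.

Definition vertex_separator (S : {set T}) : Prop := disconnected_set (~: S).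

Definition minimal_vertex_separator (S : {set T}) : Prop :=
  vertex_separator S /\ forall S' : {set T}, S' \proper S -> ~ vertex_separator S'.
End Graphs.

(* Rooted trees with leaves labelled by vertices and internal nodes labelled
   by a bool (false = 0 = disjoint union, true = 1 = join). *)
Inductive cotree (T : Type) : Type :=
| CLeaf : T -> cotree T
| CNode : bool -> seq (cotree T) -> cotree T.
Arguments CLeaf {T}.
Arguments CNode {T}.

Fixpoint leaves (T : Type) (t : cotree T) : seq T :=
  match t with
  | CLeaf v => [:: v]
  | CNode _ cs => flatten (map (@leaves T) cs)
  end.

Definition is_node (T : Type) (t : cotree T) : bool :=
  if t is CNode _ _ then true else false.

Definition root_children (T : Type) (t : cotree T) : seq (cotree T) :=
  if t is CNode _ cs then cs else [::].

Definition label_differs (T : Type) (b : bool) (c : cotree T) : bool :=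
  if c is CNode b' _ then b' != b else true.

Fixpoint wf_cotree (T : Type) (t : cotree T) : bool :=
  match t with
  | CLeaf _ => true
  | CNode b cs => [&& 1 < size cs, all (label_differs b) cs & all (@wf_cotree T) cs]
  end.

(* lca_label t u v : the label of the lowest common ancestor of the leaves
   u and v in t (false if there is none / it is a leaf). *)
Fixpoint lca_label (T : eqType) (t : cotree T) (u v : T) : bool :=
  match t with
  | CLeaf _ => false
  | CNode b cs =>
      if has (fun c => (u \in leaves c) && (v \in leaves c)) cs
      then has (fun c => [&& u \in leaves c, v \in leaves c & lca_label c u v]) cs
      else b
  end.

Definition is_cotree_of (T : finType) (e : rel T) (t : cotree T) : Prop :=
  [/\ uniq (leaves t), forall v : T, v \in leaves t, wf_cotree t &
      forall u v : T, u != v -> e u v = lca_label t u v].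

From mathcomp Require Import all_boot.
Set Implicit Arguments. Unset Strict Implicit. Unset Printing Implicit Defensive.

(* The root of the cotree of a connected cograph is a 1-node: were it a 0-node, the leaves of its
   first child would be a union of components.  So the leaf set W of any child of the root is
   completely joined to its complement, and a vertex set meeting both W and its complement induces
   a connected graph.  Hence if G - S is disconnected, ~: S lies inside one W, and S contains ~: W.
   Conversely ~: W separates exactly when the child is a 0-node, whose children's leaf sets are
   mutually non-adjacent; it is minimal since any proper subset leaves behind a vertex of W and a
   vertex outside W. *)

Definition leaf_set (T : finType) (t : cotree T) : {set T} := [set v | v \in leaves t].

Lemma wf_cotree_has_leaf (T : eqType) (t : cotree T) : wf_cotree t -> exists v, v \in leaves t.
Proof.
move: t; fix IHt 1; case=> [v _ | b [|c cs]] //=; first by exists v; rewrite inE.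
case/and3P=> _ _ /andP[/IHt[v c_v] _]; exists v; by rewrite mem_cat c_v.
Qed.

Section FlattenNth.
Variable T : eqType.
Implicit Type ss : seq (seq T).

Lemma mem_flatten_nth ss i x : x \in nth [::] ss i -> x \in flatten ss.
Proof.
elim: ss i => [|s ss IHss] [|i] //= x_ssi; rewrite mem_cat ?x_ssi ?(IHss i) ?orbT //.
Qed.

Lemma uniq_flatten_nth ss i : uniq (flatten ss) -> uniq (nth [::] ss i).
Proof.
elim: ss i => [|s ss IHss] [|i] //=; rewrite cat_uniq => /and3P[s_uniq _ ss_uniq] //.
exact: IHss.
Qed.

Lemma uniq_flatten_nth_inj ss i j x : uniq (flatten ss) ->
  x \in nth [::] ss i -> x \in nth [::] ss j -> i = j.
Proof.
elim: ss i j => [|s ss IHss] [|i] [|j] //=; rewrite cat_uniq => /and3P[_ s_ss ss_uniq].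
- by move=> xs /mem_flatten_nth x_ss; case/hasP: s_ss; exists x.
- by move=> /mem_flatten_nth x_ss xs; case/hasP: s_ss; exists x.
- by move=> x_ssi x_ssj; congr _.+1; exact: IHss x_ssi x_ssj.
Qed.
End FlattenNth.

Section RootChildren.
Variables (T : eqType) (b : bool) (cs : seq (cotree T)) (d : cotree T).
Local Notation t := (CNode b cs).
Local Notation child i := (nth d cs i).

Lemma leaves_childE i : i < size cs -> leaves (child i) = nth [::] (map (@leaves T) cs) i.
Proof. by move=> lt_i_cs; rewrite (nth_map d). Qed.

Lemma mem_leaves_child i x : i < size cs -> x \in leaves (child i) -> x \in leaves t.
Proof. by move=> /leaves_childE-> /mem_flatten_nth. Qed.

Lemma mem_leavesP x :
  reflect (exists2 i, i < size cs & x \in leaves (child i)) (x \in leaves t).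
Proof.
apply: (iffP idP) => [/flattenP[s /(nthP [::])[i]] | [i lt_i_cs /(mem_leaves_child lt_i_cs)]] //.
by rewrite size_map => lt_i_cs <- x_s; exists i; rewrite // leaves_childE.
Qed.

Hypothesis uniq_t : uniq (leaves t).

Lemma uniq_leaves_child i : i < size cs -> uniq (leaves (child i)).
Proof. by move=> /leaves_childE->; exact: uniq_flatten_nth. Qed.

Lemma leaves_child_inj i j x : i < size cs -> j < size cs ->
  x \in leaves (child i) -> x \in leaves (child j) -> i = j.
Proof. by move=> /leaves_childE-> /leaves_childE->; exact: uniq_flatten_nth_inj. Qed.

Lemma lca_label_cross i j u v : i < size cs -> j < size cs -> i != j ->
  u \in leaves (child i) -> v \in leaves (child j) -> lca_label t u v = b.
Proof.
move=> lt_i_cs lt_j_cs neq_ij ui vj; rewrite /= ifN //; apply/(has_nthP d) => -[k lt_k_cs].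
case/andP=> uk vk; move: neq_ij.
by rewrite -(leaves_child_inj lt_k_cs lt_i_cs uk ui) -(leaves_child_inj lt_k_cs lt_j_cs vk vj) eqxx.
Qed.

Lemma lca_label_child i u v : i < size cs ->
  u \in leaves (child i) -> v \in leaves (child i) -> lca_label t u v = lca_label (child i) u v.
Proof.
move=> lt_i_cs ui vi; rewrite /= ifT; last by apply/(has_nthP d); exists i; rewrite ?ui.
apply/(has_nthP d)/idP => [[k lt_k_cs /and3P[uk _ lca_k]] | lca_i].
  by rewrite -(leaves_child_inj lt_k_cs lt_i_cs uk ui).
by exists i; rewrite ?ui ?vi.
Qed.
End RootChildren.

Section Separators.
Variables (T : finType) (e : rel T).

Lemma disconnected_not_sub1 (A : {set T}) v : disconnected_set e A -> ~~ (A \subset [set v]).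
Proof.
case=> x [y [xA yA]]; apply: contra => /subsetP A_v.
by move: (A_v x xA) (A_v y yA); rewrite !inE => /eqP-> /eqP->; rewrite connect0.
Qed.

Lemma minimal_separator_eq S S' : minimal_vertex_separator e S ->
  vertex_separator e S' -> S' \subset S -> S' = S.
Proof. by case=> _ S_min S'_sep /eqVproper[// | /S_min]. Qed.

Hypothesis e_sym : symmetric e.

Lemma induced_connect_sym A : connect_sym (induced_rel e A).
Proof. by apply: sym_connect_sym => x y; rewrite /induced_rel e_sym andbCA. Qed.

Lemma disconnected_cut (A P : {set T}) x y :
  {in A &, forall u v, u \in P -> v \notin P -> ~~ e u v} ->
  x \in A -> y \in A -> x \in P -> y \notin P -> disconnected_set e A.
Proof.
move=> P_cut xA yA xP yP; exists x, y; split=> //; apply: contra yP => conn_xy.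
have P_closed : closed (induced_rel e A) (mem P).
  apply: intro_closed; first exact: induced_connect_sym.
  move=> u v /and3P[uA vA e_uv] uP; apply: contraLR e_uv; exact: P_cut.
by rewrite -(closed_connect P_closed conn_xy).
Qed.

Section CompleteToComplement.
Variable W : {set T}.
Hypothesis W_complete : forall u v, u \in W -> v \notin W -> e u v.

Lemma disconnected_sub_complete A a : disconnected_set e A -> a \in A -> a \in W -> A \subset W.
Proof.
case=> x [y [xA yA nconn_xy]] aA aW; apply: contraNT nconn_xy => /subsetPn[z zA zW].
have induced_e u v : u \in A -> v \in A -> e u v -> induced_rel e A u v.
  by move=> uA vA e_uv; rewrite /induced_rel uA vA.
have to_z u : u \in A -> connect (induced_rel e A) u z.
  move=> uA; have [uW | uW] := boolP (u \in W); first by rewrite connect1 ?induced_e ?W_complete.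
  apply: (@connect_trans _ _ a); apply: connect1; apply: induced_e => //.
    by rewrite e_sym W_complete.
  exact: W_complete.
by rewrite (connect_trans (to_z x xA)) // induced_connect_sym to_z.
Qed.

Lemma complement_minimal_separator : disconnected_set e W -> minimal_vertex_separator e (~: W).
Proof.
move=> W_disc; split=> [|S /properP[S_W [z zW zS]] S_sep].
  by rewrite /vertex_separator setCK.
have [x [_ [xW _ _]]] := W_disc.
have xS : x \in ~: S by rewrite inE; apply: contraL xW => /(subsetP S_W); rewrite inE.
have := subsetP (disconnected_sub_complete S_sep xS xW) z.
by move: zW; rewrite !inE zS => /negbTE-> /(_ isT).
Qed.
End CompleteToComplement.
End Separators.

Lemma leaf_set_leaf (T : finType) (v : T) : leaf_set (CLeaf v) = [set v].
Proof. by apply/setP => x; rewrite !inE. Qed.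

Lemma union_node_disconnected (T : finType) (e : rel T) (cs : seq (cotree T)) :
  symmetric e -> uniq (leaves (CNode false cs)) -> wf_cotree (CNode false cs) ->
  {in leaves (CNode false cs) &, forall u v, u != v -> e u v = lca_label (CNode false cs) u v} ->
  disconnected_set e (leaf_set (CNode false cs)).
Proof.
move=> e_sym uniq_c /and3P[lt1_cs _ /all_nthP wf_cs] e_lca; set d := CNode false cs.
have lt0_cs : 0 < size cs by apply: ltnW.
have [u u0] := wf_cotree_has_leaf (wf_cs d 0 lt0_cs).
have [v v1] := wf_cotree_has_leaf (wf_cs d 1 lt1_cs).
apply: (disconnected_cut e_sym (P := leaf_set (nth d cs 0)) (x := u) (y := v)).
- move=> p q; rewrite !inE => p_c q_c p0 q0.
  have /(mem_leavesP _ _ d)[j lt_j_cs qj] := q_c.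
  have neq_0j : 0 != j by apply: contraNneq q0 => ->.
  rewrite e_lca ?(lca_label_cross uniq_c lt0_cs lt_j_cs neq_0j p0 qj) //.
  by apply: contraNneq q0 => <-.
- by rewrite inE (mem_leaves_child _ lt0_cs u0).
- by rewrite inE (mem_leaves_child _ lt1_cs v1).
- by rewrite inE.
- by rewrite inE; apply/negP => /(leaves_child_inj uniq_c lt0_cs lt1_cs)/(_ v1).
Qed.

Section CotreeRoot.
Variables (T : finType) (e : rel T) (b : bool) (cs : seq (cotree T)).
Local Notation t := (CNode b cs).
Local Notation child i := (nth t cs i).
Hypotheses (e_sym : symmetric e) (t_cotree : is_cotree_of e t).

Let uniq_t : uniq (leaves t). Proof. by case: t_cotree. Qed.
Let leaves_t v : v \in leaves t. Proof. by case: t_cotree. Qed.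
Let wf_t : wf_cotree t. Proof. by case: t_cotree. Qed.
Let e_lca u v : u != v -> e u v = lca_label t u v. Proof. by case: t_cotree => _ _ _; apply. Qed.

Lemma wf_child i : i < size cs -> wf_cotree (child i).
Proof. by case/and3P: wf_t => _ _ /all_nthP; apply. Qed.

Lemma child_cover x : exists2 i, i < size cs & x \in leaf_set (child i).
Proof. by have /(mem_leavesP _ _ t)[i lt_i_cs x_i] := leaves_t x; exists i; rewrite ?inE. Qed.

Lemma edge_leaving_child i u v : i < size cs ->
  u \in leaf_set (child i) -> v \notin leaf_set (child i) -> e u v = b.
Proof.
move=> lt_i_cs; rewrite !inE => ui vi; have [j lt_j_cs] := child_cover v; rewrite inE => vj.
have neq_ij : i != j by apply: contraNneq vi => ->.
rewrite e_lca ?(lca_label_cross uniq_t lt_i_cs lt_j_cs neq_ij ui vj) //.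
by apply: contraNneq vi => <-.
Qed.

Lemma connected_root_label : connected_graph e -> b.
Proof.
case=> _ connT; apply/negPn/negP => nb.
have lt1_cs : 1 < size cs by case/and3P: wf_t.
have lt0_cs : 0 < size cs by apply: ltnW.
have [u u0] := wf_cotree_has_leaf (wf_child lt0_cs).
have [v v1] := wf_cotree_has_leaf (wf_child lt1_cs).
have [x [y [_ _]]] : disconnected_set e setT.
  apply: (disconnected_cut e_sym (P := leaf_set (child 0)) (x := u) (y := v));
    rewrite ?in_setT ?inE //.
    by move=> p q _ _ p0 q0; rewrite (edge_leaving_child lt0_cs p0 q0) (negbTE nb).
  by apply/negP => /(leaves_child_inj uniq_t lt0_cs lt1_cs)/(_ v1).
by rewrite connT ?in_setT.
Qed.

Hypothesis b_join : b.

Lemma child_complete i : i < size cs ->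
  forall u v, u \in leaf_set (child i) -> v \notin leaf_set (child i) -> e u v.
Proof. by move=> lt_i_cs u v ui vi; rewrite (edge_leaving_child lt_i_cs ui vi). Qed.

Lemma node_child_disconnected i : i < size cs -> is_node (child i) ->
  disconnected_set e (leaf_set (child i)).
Proof.
move=> lt_i_cs.
have : label_differs b (child i) by case/and3P: wf_t => _ /all_nthP labels _; apply: labels.
have := wf_child lt_i_cs; have := uniq_leaves_child t uniq_t lt_i_cs.
have lca_i := lca_label_child (d := t) uniq_t lt_i_cs.
case: (child i) lca_i => // b' cs' lca_i uniq_i wf_i /=.
rewrite b_join eqb_id => /negbTE b'_false _; subst b'.
apply: union_node_disconnected => // u v ui vi neq_uv.
by rewrite e_lca // lca_i.
Qed.

Lemma minimal_separator_child S : minimal_vertex_separator e S ->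
  exists2 i, i < size cs & is_node (child i) /\ S = ~: leaf_set (child i).
Proof.
move=> S_min; have [[x [_ [xS _ _]]] _] := S_min.
have [i lt_i_cs xi] := child_cover x.
have S_i := disconnected_sub_complete e_sym (child_complete lt_i_cs) S_min.1 xS xi.
have node_i : is_node (child i).
  move: S_i; case: (child i) => // v; rewrite leaf_set_leaf => S_v.
  by case/negP: (disconnected_not_sub1 v S_min.1).
exists i => //; split => //; symmetry; apply: minimal_separator_eq S_min _ _.
  by rewrite /vertex_separator setCK; apply: node_child_disconnected.
by rewrite subCset.
Qed.
End CotreeRoot.

Theorem lemma3 (T : finType) (e : rel T) (t : cotree T) :
  symmetric e -> irreflexive e ->
  connected_graph e -> is_cotree_of e t ->
  forall S : {set T},
    minimal_vertex_separator e S <->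
    (exists2 i, i < size (root_children t) &
       let w := nth t (root_children t) i in
       is_node w /\ S = ~: [set v | v \in leaves w]).
Proof.
move=> e_sym _ e_conn t_cotree S.
case: t t_cotree => [a | b cs] t_cotree /=.
  split=> [[S_sep _] | [] //]; case/negP: (disconnected_not_sub1 a S_sep).
  by apply/subsetP => x _; case: t_cotree => _ /(_ x); rewrite !inE.
have b_join := connected_root_label e_sym t_cotree e_conn.
split; first exact: minimal_separator_child.
case=> i lt_i_cs [node_i ->].
apply: (complement_minimal_separator e_sym (child_complete t_cotree b_join lt_i_cs)).
exact: node_child_disconnected.
Qed.
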